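(* Let $A\in\mathbb{C}^{m\times n}$ with $\mathrm{rank}(A^{\sim}AA^{\sim})=\mathrm{rank}(A)$ (so that $A^{\mathfrak{m}}$ exists), and let $X\in\mathbb{C}^{n\times m}$. Then the following are equivalent: (1) $X=A^{\mathfrak{m}}$; (2) there exist $B\in\mathbb{C}^{m\times m}$ and $C\in\mathbb{C}^{n\times n}$ such that $AXA=A$, $X=A^{\sim}B$ and $X=CA^{\sim}$. Moreover, such $B$ and $C$ are given by $$B=(A^{\sim})^{(1)}A^{\mathfrak{m}}+(I_m-(A^{\sim})^{(1)}A^{\sim})Y,\qquad C=A^{\mathfrak{m}}(A^{\sim})^{(1)}+Z(I_n-A^{\sim}(A^{\sim})^{(1)}),$$ where $Y\in\mathbb{C}^{m\times m}$ and $Z\in\mathbb{C}^{n\times n}$ are arbitrary and $(A^{\sim})^{(1)}$ is a $\{1\}$-inverse of $A^{\sim}$.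
   Context: For a positive integer $k$, the Minkowski metric matrix of order $k$ is $G_k=\mathrm{diag}(1,-I_{k-1})$ (with $G_1=(1)$). For $A\in\mathbb{C}^{m\times n}$, the Minkowski adjoint is $A^{\sim}=G_nA^*G_m$, where $A^*$ is the conjugate transpose. The Minkowski inverse of $A$, denoted $A^{\mathfrak{m}}$, is the (unique) matrix $X\in\mathbb{C}^{n\times m}$ with $AXA=A$, $XAX=X$, $(AX)^{\sim}=AX$, $(XA)^{\sim}=XA$, when it exists. A $\{1\}$-inverse of a matrix $M$ is any $M^{(1)}$ with $MM^{(1)}M=M$. *)

(* Scalars: an arbitrary numClosedFieldType C (e.g. the complex
   numbers), with conjugation Num.conj. *)
From HB Require Import structures.
From mathcomp Require Import all_boot all_order all_algebra.
Set Implicit Arguments. Unset Strict Implicit. Unset Printing Implicit Defensive.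
Import Order.TTheory GRing.Theory Num.Theory.
Local Open Scope ring_scope.

Definition minkG (C : numClosedFieldType) (k : nat) : 'M[C]_k :=
  diag_mx (\row_(i < k) (if val i == 0%N then 1 else -1)).

Definition conjT (C : numClosedFieldType) (m n : nat) (A : 'M[C]_(m, n)) : 'M[C]_(n, m) :=
  \matrix_(i < n, j < m) Num.conj (A j i).

Definition madj (C : numClosedFieldType) (m n : nat) (A : 'M[C]_(m, n)) : 'M[C]_(n, m) :=
  minkG C n *m conjT A *m minkG C m.

Definition is_minkowski_inverse (C : numClosedFieldType) (m n : nat)
  (A : 'M[C]_(m, n)) (X : 'M[C]_(n, m)) : Prop :=
  [/\ A *m X *m A = A, X *m A *m X = X,
      madj (A *m X) = A *m X & madj (X *m A) = X *m A].

Definition is_inv1 (C : numClosedFieldType) (p q : nat)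
  (M : 'M[C]_(p, q)) (M1 : 'M[C]_(q, p)) : Prop :=
  M *m M1 *m M = M.

(* Write W for the Minkowski adjoint of A; the adjoint is an involutive
   anti-automorphism of matrix multiplication.  If X is the Minkowski inverse,
   the symmetry of AX and XA gives X = XAX = (XA)^~ X = W X^~ X and likewise
   X = X X^~ W.  Conversely, the rank condition says that W A W has the same
   row space and the same column space as W, so W = V W A W = W A W U; with
   AXA = A, X = W B and X = C W this yields W A X = W = X A W, and taking
   adjoints gives A = (AX)^~ A = A (XA)^~, from which the Penrose equations
   follow.  The formulas for B and C are the general solutions of W B = X and
   C W = X built from a {1}-inverse of W. *)
From mathcomp Require Import all_boot all_algebra.
Set Implicit Arguments. Unset Strict Implicit. Unset Printing Implicit Defensive.
Import GRing.Theory Num.Theory.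
Local Open Scope ring_scope.

Section RankFactorization.
Variable F : fieldType.

Lemma rank_mulmx_eq_factorl m n p (P : 'M[F]_(m, n)) (Q : 'M[F]_(n, p)) :
  \rank (P *m Q) = \rank Q -> exists V : 'M[F]_(n, m), Q = V *m (P *m Q).
Proof.
move=> rPQ; have sPQ : (P *m Q <= Q)%MS by apply: submxMl.
have : (P *m Q == Q)%MS by rewrite -(mxrank_leqif_eq sPQ) rPQ.
by case/andP=> _ /submxP.
Qed.

Lemma rank_mulmx_eq_factorr m n p (P : 'M[F]_(m, n)) (Q : 'M[F]_(n, p)) :
  \rank (P *m Q) = \rank P -> exists U : 'M[F]_(p, n), P = P *m Q *m U.
Proof.
move=> rPQ; have [V eV] : exists V, P^T = V *m (Q^T *m P^T).
  by apply: rank_mulmx_eq_factorl; rewrite -trmx_mul !mxrank_tr.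
by exists V^T; apply: trmx_inj; rewrite !trmx_mul trmxK -eV.
Qed.

Lemma rank_WAW_mulAX m n (A : 'M[F]_(m, n)) (W X : 'M[F]_(n, m)) (Cm : 'M[F]_n) :
  \rank (W *m A *m W) = \rank W -> A *m X *m A = A -> X = Cm *m W ->
  W *m A *m X = W.
Proof.
move=> rW AXA hC; have [U eU] : exists U, W = W *m (A *m W) *m U.
  by apply: rank_mulmx_eq_factorr; rewrite mulmxA.
have XAW : X = X *m A *m W *m U by rewrite {1}hC {1}eU !mulmxA -hC.
rewrite {1}XAW !mulmxA -(mulmxA W A X) -(mulmxA W (A *m X) A) AXA.
by rewrite -(mulmxA W A W) -eU.
Qed.

Lemma rank_WAW_mulXA m n (A : 'M[F]_(m, n)) (W X : 'M[F]_(n, m)) (B : 'M[F]_m) :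
  \rank (W *m A *m W) = \rank W -> A *m X *m A = A -> X = W *m B ->
  X *m A *m W = W.
Proof.
move=> rW AXA hB; have [V eV] : exists V, W = V *m (W *m A *m W).
  exact: rank_mulmx_eq_factorl.
have WAX : X = V *m W *m A *m X.
  by rewrite {1}hB {1}eV !mulmxA -[_ *m W *m B]mulmxA -hB.
rewrite {1}WAX -(mulmxA (V *m W) A X) -(mulmxA (V *m W) (A *m X) A) AXA.
by rewrite -!(mulmxA V) -eV.
Qed.

End RankFactorization.

Section Inverse1Solutions.
Variable R : pzRingType.

Lemma inv1_solutionl m n p (M : 'M[R]_(m, n)) (M1 : 'M[R]_(n, m))
    (X : 'M[R]_(m, p)) (B : 'M[R]_(n, p)) (Y : 'M[R]_(n, p)) :
  M *m M1 *m M = M -> X = M *m B ->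
  X = M *m (M1 *m X + (1%:M - M1 *m M) *m Y).
Proof.
move=> hM1 ->; rewrite mulmxDr [M *m (_ *m Y)]mulmxA mulmxBr mulmx1 !mulmxA hM1.
by rewrite subrr mul0mx addr0.
Qed.

Lemma inv1_solutionr m n p (M : 'M[R]_(m, n)) (M1 : 'M[R]_(n, m))
    (X : 'M[R]_(p, n)) (Cm : 'M[R]_(p, m)) (Z : 'M[R]_(p, m)) :
  M *m M1 *m M = M -> X = Cm *m M ->
  X = (X *m M1 + Z *m (1%:M - M *m M1)) *m M.
Proof.
move=> hM1 ->; rewrite mulmxDl -(mulmxA Z) mulmxBl mul1mx hM1 subrr mulmx0.
by rewrite addr0 -!mulmxA [M *m (M1 *m M)]mulmxA hM1.
Qed.

End Inverse1Solutions.

Section MinkowskiAdjoint.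
Variable C : numClosedFieldType.

Lemma conjTE m n (A : 'M[C]_(m, n)) : conjT A = (map_mx Num.conj A)^T.
Proof. by apply/matrixP=> i j; rewrite !mxE. Qed.

Lemma conjTM m n p (A : 'M[C]_(m, n)) (B : 'M[C]_(n, p)) :
  conjT (A *m B) = conjT B *m conjT A.
Proof. by rewrite !conjTE map_mxM trmx_mul. Qed.

Lemma conjTK m n (A : 'M[C]_(m, n)) : conjT (conjT A) = A.
Proof. by apply/matrixP=> i j; rewrite !mxE conjCK. Qed.

Lemma conjT_minkG k : conjT (minkG C k) = minkG C k.
Proof.
apply/matrixP=> i j; rewrite !mxE; case: (eqVneq i j) => [->|_].
  by case: ifP; rewrite ?rmorphN rmorph1.
by rewrite !mulr0n rmorph0.
Qed.

Lemma minkGK k : minkG C k *m minkG C k = 1%:M.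
Proof.
by rewrite /minkG mulmx_diag; apply/matrixP=> i j; rewrite !mxE;
  case: ifP; rewrite ?mulrNN mulr1.
Qed.

Lemma madjM m n p (A : 'M[C]_(m, n)) (B : 'M[C]_(n, p)) :
  madj (A *m B) = madj B *m madj A.
Proof.
by rewrite /madj conjTM !mulmxA -[_ *m minkG C n *m minkG C n]mulmxA minkGK mulmx1.
Qed.

Lemma madjK m n (A : 'M[C]_(m, n)) : madj (madj A) = A.
Proof.
by rewrite /madj !conjTM conjTK !conjT_minkG !mulmxA minkGK mul1mx -mulmxA minkGK mulmx1.
Qed.

Lemma mxrank_madj_le m n (A : 'M[C]_(m, n)) : (\rank (madj A) <= \rank A)%N.
Proof.
rewrite /madj; apply: leq_trans (mxrankM_maxl _ _) _.
apply: leq_trans (mxrankM_maxr _ _) _.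
by rewrite conjTE mxrank_tr mxrank_map.
Qed.

Lemma mxrank_madj m n (A : 'M[C]_(m, n)) : \rank (madj A) = \rank A.
Proof.
by apply/eqP; rewrite eqn_leq mxrank_madj_le -{1}(madjK A) mxrank_madj_le.
Qed.

End MinkowskiAdjoint.

Section MinkowskiInverse.
Variables (C : numClosedFieldType) (m n : nat).
Variables (A : 'M[C]_(m, n)) (X : 'M[C]_(n, m)).

Lemma minkowski_inverse_madjl :
  is_minkowski_inverse A X -> X = madj A *m (madj X *m X).
Proof. by case=> _ hXAX _ hXA; rewrite mulmxA -madjM hXA hXAX. Qed.

Lemma minkowski_inverse_madjr :
  is_minkowski_inverse A X -> X = X *m madj X *m madj A.
Proof. by case=> _ hXAX hAX _; rewrite -mulmxA -madjM hAX mulmxA hXAX. Qed.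

Hypothesis rank_madjAAmadj : \rank (madj A *m A *m madj A) = \rank A.
Hypothesis AXA : A *m X *m A = A.

Lemma minkowski_inverse_of_factors B Cm :
  X = madj A *m B -> X = Cm *m madj A -> is_minkowski_inverse A X.
Proof.
have rW : \rank (madj A *m A *m madj A) = \rank (madj A).
  by rewrite rank_madjAAmadj mxrank_madj.
move=> hB hC; have WAX := rank_WAW_mulAX rW AXA hC.
have XAW := rank_WAW_mulXA rW AXA hB.
have madjAX_A : madj (A *m X) *m A = A.
  by rewrite madjM -mulmxA -[Y in _ *m (_ *m Y) = _](madjK A) -!madjM WAX madjK.
have A_madjXA : A *m madj (X *m A) = A.
  by rewrite madjM -[Y in Y *m _ = _](madjK A) -!madjM XAW madjK.
rewrite /is_minkowski_inverse !madjM in madjAX_A A_madjXA *.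
(* [madj A] is itself a product, so it is abstracted before reassociating. *)
move: (madj X) (madj A) hC WAX XAW madjAX_A A_madjXA => Xs W hC WAX XAW XsWA AWXs.
split=> //.
- by rewrite {3}hC -{1}WAX !mulmxA -hC.
- by rewrite -{1}XsWA -!mulmxA [W *m (A *m X)]mulmxA WAX.
- by rewrite -{1}AWXs !mulmxA XAW.
Qed.

End MinkowskiInverse.

Theorem theorem5p7 (C : numClosedFieldType) (m n : nat)
  (A : 'M[C]_(m, n)) (X : 'M[C]_(n, m)) :
  \rank (madj A *m A *m madj A) = \rank A ->
  (is_minkowski_inverse A X <->
     exists (B : 'M[C]_m) (Cm : 'M[C]_n),
       [/\ A *m X *m A = A, X = madj A *m B & X = Cm *m madj A])
  /\
  (is_minkowski_inverse A X ->
     forall (A1 : 'M[C]_(m, n)) (Y : 'M[C]_m) (Z : 'M[C]_n),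
       is_inv1 (madj A) A1 ->
       let B := A1 *m X + (1%:M - A1 *m madj A) *m Y in
       let Cm := X *m A1 + Z *m (1%:M - madj A *m A1) in
       [/\ A *m X *m A = A, X = madj A *m B & X = Cm *m madj A]).
Proof.
move=> hr; split; first split.
- move=> hX; exists (madj X *m X), (X *m madj X).
  by split; [case: hX | exact: minkowski_inverse_madjl | exact: minkowski_inverse_madjr].
- by case=> B [Cm [AXA hB hC]]; exact: minkowski_inverse_of_factors hr AXA _ _ hB hC.
- move=> hX A1 Y Z hA1 B Cm; split; first by case: hX.
  + exact: inv1_solutionl hA1 (minkowski_inverse_madjl hX).
  + exact: inv1_solutionr hA1 (minkowski_inverse_madjr hX).
Qed.
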